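(* For $N\ge1$ let $\mathbf{m}=N(1,0,\dots,0)^\top\in\mathbb{R}^{N+1}$, $\mathbf{M}=\mathrm{diag}(\mathbf{m})$, and let $\mathbf{Q}_N$ be the tridiagonal matrix with $(\mathbf{Q}_N)_{kk}=-N$, $(\mathbf{Q}_N)_{k+1,k}=N-k$, $(\mathbf{Q}_N)_{k-1,k}=k$ (indices $0,\dots,N$) and zeros elsewhere. For $\mu>0$ let $\mathbf{p}^{(N)}(\mu)=(p_0,\dots,p_N)$ be the positive vector with $\sum_i p_i=1$ satisfying $(\mathbf{M}+\mu\mathbf{Q}_N)\mathbf{p}=\overline{m}\,\mathbf{p}$, $\overline{m}=\mathbf{m}\cdot\mathbf{p}$, and let $\overline{r}=\overline{m}/N=p_0$. Then: (i) if $0<\mu<1$, then $\lim_{N\to\infty}p_0=\lim_{N\to\infty}\overline{r}=1-\mu$, and for each fixed integer $a\ge1$, $\lim_{N\to\infty}p_a=(1-\mu)\mu^a$; (ii) if $\mu\ge1$, then $\lim_{N\to\infty}\overline{r}=\lim_{N\to\infty}p_0=0$.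
   Context: This is the Crow–Kimura quasispecies model with the single peaked fitness landscape; $\mathbf{p}^{(N)}(\mu)$ is the normalized Perron eigenvector of $\mathbf{M}+\mu\mathbf{Q}_N$ and $\overline{m}$ its dominant eigenvalue. *)

From HB Require Import structures.
From mathcomp Require Import all_boot all_order all_algebra.
From mathcomp Require Import all_classical all_reals all_analysis.
Set Implicit Arguments. Unset Strict Implicit. Unset Printing Implicit Defensive.
Import Order.TTheory GRing.Theory Num.Theory.
Local Open Scope ring_scope.

Definition mvec (R : realType) (N : nat) : 'cV[R]_(N.+1) :=
  \col_(i < N.+1) (if (i : nat) == 0%N then N%:R else 0).

Definition Mmat (R : realType) (N : nat) : 'M[R]_(N.+1) :=
  \matrix_(i < N.+1, j < N.+1) (if (i == j) && ((i : nat) == 0%N) then N%:R else 0).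

Definition QN (R : realType) (N : nat) : 'M[R]_(N.+1) :=
  \matrix_(i < N.+1, j < N.+1)
    (if (i : nat) == (j : nat) then - N%:R
     else if (i : nat) == (j : nat).+1 then (N - j)%:R
     else if (i : nat).+1 == (j : nat) then (j : nat)%:R
     else 0).

Definition mbar (R : realType) (N : nat) (p : 'cV[R]_(N.+1)) : R :=
  \sum_(i < N.+1) mvec R N i 0 * p i 0.

Definition is_quasispecies (R : realType) (N : nat) (mu : R) (p : 'cV[R]_(N.+1)) : Prop :=
  (forall i : 'I_(N.+1), 0 < p i 0) /\
  \sum_(i < N.+1) p i 0 = 1 /\
  (Mmat R N + mu *: QN R N) *m p = mbar p *: p.

Definition rbar (R : realType) (N : nat) (p : 'cV[R]_(N.+1)) : R := mbar p / N%:R.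

From HB Require Import structures.
From mathcomp Require Import all_boot all_order all_algebra.
From mathcomp Require Import all_classical all_reals all_analysis.
From mathcomp Require Import zify ring lra.
Set Implicit Arguments.
Unset Strict Implicit.
Unset Printing Implicit Defensive.
Import Order.TTheory GRing.Theory Num.Theory.
Import numFieldNormedType.Exports.
Local Open Scope ring_scope.
Local Open Scope classical_set_scope.

(* Since m = N e_0, the mean fitness is N p_0, so rbar = p_0. Row 0 of the
   eigen-equation reads N p_0 (p_0 - (1 - mu)) = mu p_1, which lies in (0, mu].
   For mu < 1 this pins p_0 within mu / ((1 - mu) N) above 1 - mu; for mu >= 1
   it gives p_0^2 <= mu / N. Row a + 1 reads
   p_(a+1) (mu + p_0) = mu (1 - a/N) p_a + mu (a+2)/N p_(a+2),
   whose last term is O(1/N); in the limit p_(a+1) = mu p_a, by induction on a. *)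

Lemma inord0 n : inord 0 = ord0 :> 'I_n.+1.
Proof. by apply: val_inj; rewrite /= inordK. Qed.

Section CrowKimuraMatrices.
Variables (R : realType) (N : nat).
Implicit Type x : 'cV[R]_N.+1.

Lemma sum_ord_if_eq (F : 'I_N.+1 -> R) (k : nat) :
  \sum_(j < N.+1) (if (j : nat) == k then F j else 0) =
  if (k < N.+1)%N then F (inord k) else 0.
Proof.
rewrite -big_mkcond -(@big_ord1_eq R 0 +%R (fun n => F (inord n))).
by apply: eq_bigr => j _; rewrite inord_val.
Qed.

Lemma Mmat_mulmx x (i : 'I_N.+1) :
  (Mmat R N *m x) i 0 = if (i : nat) == 0%N then N%:R * x ord0 0 else 0.
Proof.
rewrite mxE (bigD1 ord0) //= big1 ?addr0 => [|j].
  by rewrite mxE -val_eqE andbb; case: ifP; rewrite ?mul0r.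
rewrite -val_eqE /= mxE => /negbTE j0.
by case: eqP => [->|]; rewrite ?j0 ?andbF mul0r.
Qed.

Lemma QN_mulmx_row0 x : (1 <= N)%N ->
  (QN R N *m x) ord0 0 = - N%:R * x ord0 0 + x (inord 1) 0.
Proof.
move=> N_gt0; rewrite mxE.
rewrite (eq_bigr (fun j : 'I_N.+1 => (if (j : nat) == 0%N then - N%:R * x j 0 else 0)
   + (if (j : nat) == 1%N then x j 0 else 0))).
  by rewrite big_split /= !sum_ord_if_eq ltn0Sn ltnS N_gt0 inord0.
move=> [j lt_jN] _; rewrite mxE /=.
by case: j lt_jN => [|[|j]] ? /=; rewrite ?mul1r ?mul0r ?addr0 ?add0r.
Qed.

Lemma QN_mulmx_rowS x (k : nat) : (k.+2 <= N)%N ->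
  (QN R N *m x) (inord k.+1) 0 =
  (N - k)%:R * x (inord k) 0 - N%:R * x (inord k.+1) 0 + k.+2%:R * x (inord k.+2) 0.
Proof.
move=> le_k2N; rewrite mxE.
rewrite (eq_bigr (fun j : 'I_N.+1 => (if (j : nat) == k then (N - k)%:R * x j 0 else 0)
   + (if (j : nat) == k.+1 then - N%:R * x j 0 else 0)
   + (if (j : nat) == k.+2 then k.+2%:R * x j 0 else 0))).
  rewrite !big_split /= !sum_ord_if_eq !ifT ?mulNr //; lia.
move=> [j lt_jN] _; rewrite mxE /= inordK; last lia.
(* at most one of the three index tests succeeds; lia kills the other cases *)
by do ![case: eqP => ?]; try lia; subst; rewrite ?mul0r ?addr0 ?add0r.
Qed.

Lemma mbarE x : mbar x = N%:R * x ord0 0.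
Proof.
rewrite /mbar (eq_bigr (fun i : 'I_N.+1 => if (i : nat) == 0%N then N%:R * x i 0 else 0)).
  by rewrite sum_ord_if_eq inord0.
by move=> i _; rewrite mxE; case: eqP; rewrite ?mul0r.
Qed.

Lemma rbarE x : (1 <= N)%N -> rbar x = x ord0 0.
Proof. by move=> N_gt0; rewrite /rbar mbarE mulrC mulKf // pnatr_eq0 -lt0n. Qed.

End CrowKimuraMatrices.

Section QuasispeciesEquations.
Variables (R : realType) (N : nat) (mu : R) (p : 'cV[R]_N.+1).
Hypothesis p_qs : is_quasispecies mu p.

Lemma quasispecies_gt0 i : 0 < p i 0.
Proof. by case: p_qs. Qed.

Lemma quasispecies_le1 i : p i 0 <= 1.
Proof.
case: p_qs => p_gt0 [<- _]; rewrite (bigD1 i) //= lerDl sumr_ge0 // => j _.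
exact: ltW.
Qed.

Lemma quasispecies_row i :
  (Mmat R N *m p) i 0 + mu * (QN R N *m p) i 0 = N%:R * p ord0 0 * p i 0.
Proof.
by case: p_qs => _ [_ /matrixP/(_ i 0)]; rewrite mulmxDl -scalemxAl !mxE mbarE.
Qed.

Lemma quasispecies_row0 : (1 <= N)%N ->
  N%:R * p ord0 0 * (p ord0 0 - (1 - mu)) = mu * p (inord 1) 0.
Proof.
move=> N_gt0; have := quasispecies_row ord0.
by rewrite Mmat_mulmx QN_mulmx_row0 //=; lra.
Qed.

Lemma quasispecies_rowS k : (k.+2 <= N)%N ->
  p (inord k.+1) 0 * (mu + p ord0 0) =
  mu * (1 - k%:R / N%:R) * p (inord k) 0 + mu * k.+2%:R / N%:R * p (inord k.+2) 0.
Proof.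
move=> le_k2N; have N_neq0 : N%:R != 0 :> R by rewrite pnatr_eq0; lia.
have := quasispecies_row (inord k.+1).
rewrite Mmat_mulmx QN_mulmx_rowS // inordK ?add0r ?natrB; try lia.
move=> rowS.
have -> : p (inord k.+1) 0 * (mu + p ord0 0) =
    mu * p (inord k.+1) 0 + N%:R * p ord0 0 * p (inord k.+1) 0 / N%:R by field.
by rewrite -rowS; field.
Qed.

Lemma quasispecies_row0_bounds : 0 < mu -> (1 <= N)%N ->
  0 < N%:R * p ord0 0 * (p ord0 0 - (1 - mu)) <= mu.
Proof.
move=> mu_gt0 N_gt0; rewrite quasispecies_row0 // mulr_gt0 ?quasispecies_gt0 //=.
by apply: ler_piMr; [exact: ltW | exact: quasispecies_le1].
Qed.

End QuasispeciesEquations.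

Section Limits.
Variable R : realType.

Lemma cvg_div_natr (c : R) : (fun N : nat => c / N%:R) @ \oo --> 0.
Proof.
have : (fun N : nat => N%:R^-1 : R) @ \oo --> 0.
  by rewrite -cvg_shiftS; exact: cvg_harmonic.
by move=> /(cvgMl_tmp (a := c)); rewrite mulr0.
Qed.

Lemma squeeze_cvg0_div_natr (u : nat -> R) (c : R) :
  (\forall N \near \oo, 0 <= u N <= c / N%:R) -> u @ \oo --> 0.
Proof.
by move=> u_bound; apply: (squeeze_cvgr u_bound); [exact: cvg_cst | exact: cvg_div_natr].
Qed.

Variables (mu : R) (p : forall N : nat, 'cV[R]_N.+1).
Hypothesis mu_gt0 : 0 < mu.
Hypothesis p_qs : forall N, (1 <= N)%N -> is_quasispecies mu (p N).

Lemma cvg_rbar (l : R) :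
  (fun N => p N ord0 0) @ \oo --> l -> (fun N => rbar (p N)) @ \oo --> l.
Proof.
apply: cvg_trans; apply: near_eq_cvg; near=> N.
by rewrite rbarE //; near: N; exact: nbhs_infty_ge.
Unshelve. all: by end_near.
Qed.

Lemma cvg_quasispecies0_lt1 : mu < 1 -> (fun N => p N ord0 0) @ \oo --> 1 - mu.
Proof.
move=> mu_lt1; apply/subr_cvg0; apply: (@squeeze_cvg0_div_natr _ (mu / (1 - mu))).
near=> N.
have N_gt0 : (1 <= N)%N by near: N; exact: nbhs_infty_ge.
have := quasispecies_row0_bounds (p_qs N_gt0) mu_gt0 N_gt0.
have := quasispecies_gt0 (p_qs N_gt0) ord0.
set x := p N ord0 0 => x_gt0 /andP[gap_gt0 gap_le].
have N_pos : 0 < N%:R :> R by rewrite ltr0n.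
have d_gt0 : 0 < x - (1 - mu).
  by move: gap_gt0; rewrite pmulr_rgt0 // pmulr_rgt0.
have Nd_gt0 : 0 < N%:R * (x - (1 - mu)) by rewrite mulr_gt0.
rewrite ltW //= !ler_pdivlMr ?subr_gt0 //; nra.
Unshelve. all: by end_near.
Qed.

Lemma cvg_quasispecies0_ge1 : 1 <= mu -> (fun N => p N ord0 0) @ \oo --> 0.
Proof.
move=> mu_ge1.
have sq_cvg : (fun N => p N ord0 0 ^+ 2) @ \oo --> 0.
  apply: (@squeeze_cvg0_div_natr _ mu); near=> N.
  have N_gt0 : (1 <= N)%N by near: N; exact: nbhs_infty_ge.
  have := quasispecies_row0_bounds (p_qs N_gt0) mu_gt0 N_gt0.
  have := quasispecies_gt0 (p_qs N_gt0) ord0.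
  set x := p N ord0 0 => x_gt0 /andP[_ gap_le].
  have N_pos : 0 < N%:R :> R by rewrite ltr0n.
  rewrite sqr_ge0 /= ler_pdivlMr //; nra.
suff : (Num.sqrt \o (fun N => p N ord0 0 ^+ 2)) @ \oo --> 0.
  apply: cvg_trans; apply: near_eq_cvg; near=> N.
  have N_gt0 : (1 <= N)%N by near: N; exact: nbhs_infty_ge.
  by rewrite /= sqrtr_sqr ger0_norm // ltW // (quasispecies_gt0 (p_qs N_gt0)).
by rewrite -sqrtr0; apply: continuous_cvg => //; exact: sqrt_continuous.
Unshelve. all: by end_near.
Qed.

Lemma cvg_quasispecies_lt1 : mu < 1 ->
  forall a, (fun N => p N (inord a) 0) @ \oo --> (1 - mu) * mu ^+ a.
Proof.
move=> mu_lt1; elim=> [|a IHa].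
  rewrite expr0 mulr1; apply: cvg_trans (cvg_quasispecies0_lt1 mu_lt1).
  by apply: near_eq_cvg; near=> N; rewrite inord0.
have tail_cvg : (fun N => mu * a.+2%:R / N%:R * p N (inord a.+2) 0) @ \oo --> 0.
  apply: (@squeeze_cvg0_div_natr _ (mu * a.+2%:R)); near=> N.
  have N_gt0 : (1 <= N)%N by near: N; exact: nbhs_infty_ge.
  have c_ge0 : 0 <= mu * a.+2%:R / N%:R by rewrite divr_ge0 // mulr_ge0 // ltW.
  have x_gt0 := quasispecies_gt0 (p_qs N_gt0) (inord a.+2).
  rewrite (mulr_ge0 c_ge0 (ltW x_gt0)) /=.
  exact: ler_piMr c_ge0 (quasispecies_le1 (p_qs N_gt0) _).
have rhs_cvg : (fun N => (mu * (1 - a%:R / N%:R) * p N (inord a) 0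
    + mu * a.+2%:R / N%:R * p N (inord a.+2) 0) / (mu + p N ord0 0))
    @ \oo --> (mu * (1 - 0) * ((1 - mu) * mu ^+ a) + 0) / (mu + (1 - mu)).
  apply: cvgM.
    apply: cvgD tail_cvg; apply: cvgM IHa; apply: cvgMl_tmp.
    exact: cvgB (cvg_cst _) (cvg_div_natr _).
  apply: cvgV; first by rewrite subrKC oner_eq0.
  exact: cvgD (cvg_cst _) (cvg_quasispecies0_lt1 mu_lt1).
have -> : (1 - mu) * mu ^+ a.+1 =
    (mu * (1 - 0) * ((1 - mu) * mu ^+ a) + 0) / (mu + (1 - mu)).
  by rewrite subrKC divr1 subr0 mulr1 addr0 exprS mulrCA.
apply: cvg_trans rhs_cvg; apply: near_eq_cvg; near=> N.
have le_a2N : (a.+2 <= N)%N by near: N; exact: nbhs_infty_ge.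
have N_gt0 : (1 <= N)%N by lia.
rewrite -(quasispecies_rowS (p_qs N_gt0)) // mulfK //.
by rewrite gt_eqF // ltr_wpDr ?ltW ?(quasispecies_gt0 (p_qs N_gt0)).
Unshelve. all: by end_near.
Qed.

End Limits.

Theorem proposition4 (R : realType) (mu : R) (p : forall N : nat, 'cV[R]_(N.+1)) :
  0 < mu ->
  (forall N : nat, (1 <= N)%N -> is_quasispecies mu (p N)) ->
  (mu < 1 ->
     ((fun N => p N ord0 0) @ \oo --> 1 - mu) /\
     ((fun N => rbar (p N)) @ \oo --> 1 - mu) /\
     (forall a : nat, (1 <= a)%N ->
        (fun N => p N (inord a) 0) @ \oo --> (1 - mu) * mu ^+ a)) /\
  (1 <= mu ->
     ((fun N => rbar (p N)) @ \oo --> 0%R) /\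
     ((fun N => p N ord0 0) @ \oo --> 0%R)).
Proof.
move=> mu_gt0 p_qs; split=> [mu_lt1 | mu_ge1].
  have p0_cvg := cvg_quasispecies0_lt1 mu_gt0 p_qs mu_lt1.
  split; [exact: p0_cvg | split; [exact: cvg_rbar | move=> a _]].
  exact: cvg_quasispecies_lt1.
have p0_cvg := cvg_quasispecies0_ge1 mu_gt0 p_qs mu_ge1.
by split; [exact: cvg_rbar | exact: p0_cvg].
Qed.
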